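(* The cycle $C_5$ is $2$-adjustable, but $C_5$ admits no locally injective homomorphism to $\mathring{K}_3$.
   Context: $\mathring{K}_n$ denotes the complete graph on $n$ vertices with one loop added at a single vertex. A homomorphism $f:G\to H$ is a map $V(G)\to V(H)$ with $f(u)f(v)\in E(H)$ whenever $uv\in E(G)$; it is locally injective if for every vertex $v$, $f$ is injective on $N(v)$. An incidence of $G$ is a pair $(v,e)$ with $v\in e\in E(G)$; incidences $(v,e),(u,f)$ are adjacent if $v=u$, or $e=f$, or $vu\in\{e,f\}$; an incidence coloring gives adjacent incidences distinct colors. $S^0_c(v)=\{c(v,uv):uv\in E(G)\}$. An incidence coloring $c$ with palette $P$ is adjustable if there are two distinct colors $x,y\in P$ such that no vertex $v$ has $\{x,y\}\subseteq S^0_c(v)$. $G$ is $2$-adjustable if it admits an adjustable incidence coloring with palette of size $\Delta(G)+2$. *)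

From mathcomp Require Import all_boot.
Set Implicit Arguments. Unset Strict Implicit. Unset Printing Implicit Defensive.

Section Graphs.
Variables (V : finType) (G : rel V).
(* G is the adjacency relation of a (simple, for incidence colorings) graph. *)

Definition is_edge (e : {set V}) : bool :=
  [exists u : V, exists v : V, G u v && (e == [set u; v])].

Definition incidence (v : V) (e : {set V}) : bool := is_edge e && (v \in e).

Definition inc_adj (v : V) (e : {set V}) (u : V) (f : {set V}) : bool :=
  [|| v == u, e == f, [set v; u] == e | [set v; u] == f].

Definition incidence_coloring (k : nat) (c : V -> {set V} -> 'I_k) : Prop :=
  forall v e u f, incidence v e -> incidence u f -> (v, e) != (u, f) ->
    inc_adj v e u f -> c v e != c u f.

Definition S0 (k : nat) (c : V -> {set V} -> 'I_k) (v : V) : {set 'I_k} :=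
  [set c v e | e : {set V} in [set e : {set V} | incidence v e]].

Definition adjustable (k : nat) (c : V -> {set V} -> 'I_k) : Prop :=
  exists x y : 'I_k, x != y /\
    forall v : V, ~~ ((x \in S0 c v) && (y \in S0 c v)).

Definition maxdeg : nat := \max_(v : V) #|[set u | G v u]|.

Definition two_adjustable : Prop :=
  exists c : V -> {set V} -> 'I_(maxdeg + 2),
    incidence_coloring c /\ adjustable c.

Definition loc_inj_hom (W : finType) (H : rel W) (f : V -> W) : Prop :=
  (forall u v, G u v -> H (f u) (f v)) /\
  (forall v, {in [pred u | G v u] &, injective f}).
End Graphs.

Definition C5 : rel 'I_5 :=
  fun i j => (j == (i.+1 %% 5) :> nat) || (i == (j.+1 %% 5) :> nat).

Definition K3loop : rel 'I_3 :=
  fun i j => (i != j) || ((i == 0 :> nat) && (j == 0 :> nat)).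

From mathcomp Require Import all_boot zmodp.

Set Implicit Arguments.
Unset Strict Implicit.
Unset Printing Implicit Defensive.

(* List the incidences of C5 around the cycle: (0,{0,4}), (0,{0,1}), (1,{1,0}),
   (1,{1,2}), ..., (4,{4,3}), (4,{4,0}).  Two incidences are adjacent exactly
   when they are at cyclic distance 1 or 2 in this list of length 10, so the
   colours 0 1 2 0 1 2 0 1 2 3 along it form an incidence colouring with
   Delta + 2 = 4 colours; colour 3 occurs only at vertex 4, next to colour 2,
   so no vertex sees both 0 and 3.
   A locally injective homomorphism to K3 with a loop at 0 is a closed walk of
   length 5 that never backtracks.  Without the loop, any three consecutive
   vertices get three distinct colours, forcing period 3, which does not divide
   5.  With the loop on an edge, the other three vertices form a path whose
   colours in {1, 2} would have to be pairwise distinct. *)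

Lemma eq_set2 (T : finType) (a b c d : T) :
  ([set a; b] == [set c; d]) = (a == c) && (b == d) || (a == d) && (b == c).
Proof.
apply/eqP/idP => [E | /orP[]/andP[/eqP-> /eqP->] //]; last exact: setUC.
have /set2P[] : a \in [set c; d] by rewrite -E set21.
all: have /set2P[] : b \in [set c; d] by rewrite -E set22.
all: move=> Eb Ea; rewrite Ea Eb !eqxx ?orbT //=.
- by have := set22 c d; rewrite -E Ea Eb => /set2P[] ->; rewrite eqxx.
- by have := set21 c d; rewrite -E Ea Eb => /set2P[] ->; rewrite eqxx.
Qed.

Section Graphs.
Variables (V : finType) (G : rel V).

Lemma maxdeg_regular (d : nat) :
  0 < #|V| -> (forall v, #|[set u | G v u]| = d) -> maxdeg G = d.
Proof.
move=> V_gt0 deg; rewrite /maxdeg.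
by have [v0 ->] := eq_bigmax (fun v => #|[set u | G v u]|) V_gt0.
Qed.

Lemma loc_inj_hom_neq (W : finType) (H : rel W) (f : V -> W) v u w :
  loc_inj_hom G H f -> G v u -> G v w -> u != w -> f u != f w.
Proof. by case=> _ inj Gvu Gvw; apply: contra_neq => /(inj v u w Gvu Gvw). Qed.

End Graphs.

Lemma C5E u v : C5 u v = (v == ordS u) || (u == ordS v).
Proof. by []. Qed.

Lemma ordS_neq_ord_pred (v : 'I_5) : ordS v != ord_pred v.
Proof. by case: v => [[|[|[|[|[|?]]]]] ?]. Qed.

Lemma incidence_C5 v e :
  incidence C5 v e -> exists d : bool, e = [set v; if d then ordS v else ord_pred v].
Proof.
case/andP=> /existsP[a /existsP[b /andP[Cab /eqP->]]].
rewrite in_set2 => /orP[]/eqP->; rewrite C5E in Cab; case/orP: Cab => /eqP->.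
- by exists true.
- by exists false; rewrite ordSK.
- by exists false; rewrite ordSK setUC.
- by exists true; rewrite setUC.
Qed.

(* (v, e) sits at position 2v or 2v+1 of the list above, according as e
   joins v to its predecessor or to its successor. *)
Definition C5_coloring (v : 'I_5) (e : {set 'I_5}) : 'I_4 :=
  let p := v.*2 + (ordS v \in e) in if p == 9 then ord_max else inZp (p %% 3).

Lemma C5_coloring_proper : incidence_coloring C5 C5_coloring.
Proof.
move=> v e u f /incidence_C5[dv ->] /incidence_C5[du ->].
rewrite /inc_adj /C5_coloring xpair_eqE !eq_set2 !in_set2.
move: u; case: v => [[|[|[|[|[|?]]]]] ?]; case=> [[|[|[|[|[|?]]]]] ?] //.
all: by case: dv; case: du.
Qed.

Lemma S0_C5 k (c : 'I_5 -> {set 'I_5} -> 'I_k) v :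
  S0 C5 c v \subset [set c v [set v; ordS v]; c v [set v; ord_pred v]].
Proof.
apply/subsetP=> x /imsetP[e]; rewrite inE => /incidence_C5[[] ->] ->.
- exact: set21.
- exact: set22.
Qed.

Lemma C5_coloring_adjustable : adjustable C5 C5_coloring.
Proof.
exists ord0, ord_max; split=> // v.
apply/negP=> /andP[/(subsetP (S0_C5 _ _)) c0 /(subsetP (S0_C5 _ _))].
move: c0; rewrite /C5_coloring !in_set2.
by case: v => [[|[|[|[|[|?]]]]] ?].
Qed.

Lemma C5_neighbours v : [set u | C5 v u] = [set ordS v; ord_pred v].
Proof.
apply/setP=> u; rewrite inE in_set2 C5E [v == _]eq_sym.
by rewrite (can2_eq (@ordSK 5) (@ord_predK 5)).
Qed.

Lemma maxdeg_C5 : maxdeg C5 = 2.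
Proof.
apply: maxdeg_regular => [|v]; first by rewrite card_ord.
by rewrite C5_neighbours cards2 ordS_neq_ord_pred.
Qed.

Lemma C5_two_adjustable : two_adjustable C5.
Proof.
rewrite /two_adjustable maxdeg_C5.
by exists C5_coloring; split; [exact: C5_coloring_proper | exact: C5_coloring_adjustable].
Qed.

Lemma C5_no_loc_inj_hom_K3loop : ~ exists f : 'I_5 -> 'I_3, loc_inj_hom C5 K3loop f.
Proof.
case=> f lih; have [hom _] := lih.
(* [inZp] rather than [inord]: its value reduces, so edges such as
   [C5 (a 0) (a 1)] hold by computation. *)
pose a k : 'I_5 := inZp k.
have nb v u w : C5 (a v) (a u) -> C5 (a v) (a w) -> a u != a w -> f (a u) != f (a w).
  exact: loc_inj_hom_neq lih.
move: (hom (a 0) (a 1) isT) (hom (a 1) (a 2) isT) (hom (a 2) (a 3) isT).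
move: (hom (a 3) (a 4) isT) (hom (a 4) (a 0) isT).
move: (nb 0 4 1 isT isT isT) (nb 1 0 2 isT isT isT) (nb 2 1 3 isT isT isT).
move: (nb 3 2 4 isT isT isT) (nb 4 3 0 isT isT isT).
move: (f (a 0)) (f (a 1)) (f (a 2)) (f (a 3)) (f (a 4)).
by do 5 case=> [[|[|[|?]]] ?].
Qed.

Theorem mainTheorem11 :
  two_adjustable C5 /\ ~ (exists f : 'I_5 -> 'I_3, loc_inj_hom C5 K3loop f).
Proof. exact: (conj C5_two_adjustable C5_no_loc_inj_hom_K3loop). Qed.
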